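(* Let $G$ be a finite group and $\gamma$ a faithful $n$-dimensional complex representation of $G$ whose character $\chi_\gamma$ is real-valued. Let $c\in G$ be such that $\chi_\gamma(c)$ is an integer, and let $m$ be the number of conjugacy classes of $G$ on which $\chi_\gamma$ takes the value $\chi_\gamma(c)$. Then $K(\gamma)$ contains a subgroup isomorphic to $\bigl(\mathbb{Z}/(n-\chi_\gamma(c))\mathbb{Z}\bigr)^{m-1}$.
   Context: Let $G$ be a finite group with irreducible complex characters $\chi_0,\chi_1,\dots,\chi_\ell$, where $\chi_0$ is the trivial character (so $\ell+1$ is the number of conjugacy classes of $G$). For a faithful $n$-dimensional complex representation $\gamma$ of $G$ with character $\chi_\gamma$, let $M=(m_{ij})\in\mathbb{Z}^{(\ell+1)\times(\ell+1)}$ be defined by $\chi_\gamma\cdot\chi_i=\sum_{j=0}^{\ell}m_{ij}\chi_j$. The extended McKay–Cartan matrix is $\tilde C:=nI-M$, and the McKay–Cartan matrix $C$ is the $\ell\times\ell$ matrix obtained from $\tilde C$ by deleting the row and column indexed by $\chi_0$. The critical group of $\gamma$ is the finite abelian group $K(\gamma):=\operatorname{coker}(C^t:\mathbb{Z}^\ell\to\mathbb{Z}^\ell)$; equivalently $\operatorname{coker}(\tilde C^t:\mathbb{Z}^{\ell+1}\to\mathbb{Z}^{\ell+1})\cong\mathbb{Z}\oplus K(\gamma)$. *)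

From HB Require Import structures.
From mathcomp Require Import all_boot all_order all_algebra all_fingroup all_solvable all_field all_character.
Set Implicit Arguments. Unset Strict Implicit. Unset Printing Implicit Defensive.
Import Order.TTheory GRing.Theory Num.Theory.
Local Open Scope ring_scope.

Section McKay.
Variables (gT : finGroupType) (G : {group gT}) (n : nat).
Variable rG : mx_representation algC G n.

(* m_ij : chi_gamma * chi_i = sum_j m_ij chi_j, i.e. m_ij = '[chi_gamma * chi_i, chi_j]
   (a nonnegative integer; floor is its integer value). *)
Definition mckay_coef (i j : Iirr G) : int :=
  Num.floor '[cfRepr rG * 'chi_i, 'chi_j].

Definition ext_mckay_cartan : 'M[int]_(Nirr G) :=
  \matrix_(i, j) ((n%:Z *+ (i == j)) - mckay_coef i j).

(* McKay-Cartan matrix: delete row and column of chi_0; index k : 'I_l corresponds to chi_(k+1) *)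
Definition mckay_cartan : 'M[int]_(pred_Nirr G) :=
  \matrix_(i, j) ext_mckay_cartan (lift 0 i) (lift 0 j).
End McKay.

(* For an integer matrix C : 'M_l, coker(C^t : Z^l -> Z^l) = Z^l / { C^t x }.
   Writing vectors as rows, C^t x corresponds to the row x *m C.
   [coker_has_subgroup_Zk_pow C k r] says that coker(C^t) contains a subgroup
   isomorphic to (Z/kZ)^r, i.e. there is an injective group homomorphism
   (Z/kZ)^r -> coker(C^t), given by the images [f i] of the standard generators:
   well-definedness: k * f i lies in the image of C^t;
   injectivity: sum_i a_i [f i] = 0 in the cokernel forces k | a_i for all i. *)
Definition coker_has_subgroup_Zk_pow (l : nat) (C : 'M[int]_l) (k : int) (r : nat) : Prop :=
  exists f : 'I_r -> 'rV[int]_l,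
    (forall i, exists x : 'rV[int]_l, x *m C = k *: f i) /\
    (forall a : 'I_r -> int,
        (exists x : 'rV[int]_l, x *m C = \sum_(i < r) a i *: f i) ->
        forall i, (k %| a i)%Z).

From HB Require Import structures.
From mathcomp Require Import all_boot all_order all_algebra all_fingroup all_solvable all_field all_character.
Set Implicit Arguments. Unset Strict Implicit. Unset Printing Implicit Defensive.
Import Order.TTheory GRing.Theory Num.Theory.
Local Open Scope ring_scope.

(* Since chi_gamma is real, the extended McKay-Cartan matrix is symmetric, and for
   every g the vector (chi_i(g))_i is an eigenvector of it for the eigenvalue
   n - chi_gamma(g).  If g_1, ..., g_(m-1) represent the classes other than that of c
   on which chi_gamma takes the value chi_gamma(c), the rows
   (chi_(j+1)(g_s) - chi_(j+1)(c))_j are thus left eigenvectors of the McKay-Cartan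
   matrix C for the integer eigenvalue k = n - chi_gamma(c); they are independent by
   the second orthogonality relation, and faithfulness makes C nonsingular.  The Smith
   normal form of C - k then provides m-1 integer eigenvectors f_s forming part of a
   unimodular basis, and these generate a copy of (Z/kZ)^(m-1) in the cokernel: a
   relation sum a_s f_s = x C forces k x = sum a_s f_s, as C is injective. *)

Section IntegerCokernel.
Variables (R : numFieldType) (l : nat).

Lemma intr_row_free_inj m (C : 'M[int]_(m, l)) (x : 'rV[int]_m) :
  row_free (map_mx (intr : int -> R) C) -> x *m C = 0 -> x = 0.
Proof.
move=> freeC xC0; have x0 : map_mx (intr : int -> R) x = 0.
  by apply: (row_free_inj freeC); rewrite /= -map_mxM xC0 map_mx0 mul0mx.
by apply/rowP => j; move/rowP/(_ j): x0; rewrite !mxE => /eqP; rewrite intr_eq0 => /eqP.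
Qed.

Lemma row_free_ker_diag_card r (d : seq int) (E : 'M[R]_(r, l)) :
  row_free E -> E *m map_mx intr (\matrix_(i < l, j < l) (d`_i *+ (i == j :> nat))) = 0 ->
  (r <= #|[set j : 'I_l | (d`_j == 0)%R]|)%N.
Proof.
set Z := [set j | _] => freeE ED0.
have E_Z s j : j \notin Z -> E s j = 0.
  rewrite inE => dj; move/matrixP/(_ s j): ED0; rewrite !mxE (bigD1 j) //= big1 ?addr0.
    by rewrite !mxE eqxx mulr1n => /eqP; rewrite mulf_eq0 intr_eq0 (negbTE dj) orbF => /eqP.
  by move=> i /negbTE ij; rewrite !mxE (_ : (i == j :> nat) = false) ?mulr0n ?mulr0.
have defE : E = colsub enum_val E *m rowsub (enum_val : 'I_#|Z| -> _) 1%:M.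
  apply/matrixP => s j; rewrite !mxE; have [jZ|jZ] := boolP (j \in Z).
    rewrite (bigD1 (enum_rank_in jZ j)) //= big1 ?addr0.
      by rewrite !mxE enum_rankK_in ?eqxx ?mulr1.
    by move=> t tj; rewrite !mxE (_ : (_ == _) = false) ?mulr0 // -(enum_rankK_in jZ jZ);
      apply: contraNF tj => /eqP /enum_val_inj ->.
  rewrite E_Z // big1 // => t _; rewrite !mxE; case: eqP => [jt|]; last by rewrite mulr0.
  by case/negP: jZ; rewrite -jt enum_valP.
by rewrite -(eqP freeE) defE (leq_trans (mxrankM_maxl _ _)) ?rank_leq_col.
Qed.

Lemma int_kernel_split r (A : 'M[int]_l) (E : 'M[R]_(r, l)) :
  row_free E -> E *m map_mx intr A = 0 ->
  exists F : 'M[int]_(r, l), exists2 P : 'M[int]_(l, r), F *m A = 0 & F *m P = 1%:M.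
Proof.
(* With A = L D M in Smith form, the rows of invmx L at the zero diagonal entries of D
   lie in the kernel of A, and the matching columns of L are dual to them. *)
move=> freeE EA0; have [L uL [M uM [d _ defA]]] := int_Smith_normal_form A.
set D := \matrix_(i, j) _ in defA.
have mapV (B : 'M[int]_l) :
  B \in unitmx -> map_mx (intr : int -> R) B *m map_mx intr (invmx B) = 1%:M.
  by move=> uB; rewrite -map_mxM mulmxV // map_mx1.
have ELD0 : E *m map_mx intr L *m map_mx intr D = 0.
  move/(congr1 (mulmx^~ (map_mx intr (invmx M)))): EA0.
  by rewrite defA !map_mxM !mulmxA -(mulmxA _ (map_mx intr M)) mapV // mulmx1 mul0mx.
have freeEL : row_free (E *m map_mx intr L).
  by rewrite /row_free mxrankMfree // row_free_unit; case: (mulmx1_unit (mapV L uL)).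
have le_r_Z := row_free_ker_diag_card freeEL ELD0.
pose h (s : 'I_r) : 'I_l := enum_val (widen_ord le_r_Z s).
have h_inj : injective h by move=> s t /enum_val_inj [] /val_inj.
exists (rowsub h (invmx L)); exists (colsub h L).
  rewrite mul_rowsub_mx defA !mulmxA mulVmx // mul1mx -mul_rowsub_mx.
  suff -> : rowsub h D = 0 by rewrite mul0mx.
  apply/matrixP => s j; rewrite !mxE.
  by have := enum_valP (widen_ord le_r_Z s); rewrite inE => /eqP ->; rewrite mul0rn.
by rewrite -mxsub_mul mulVmx //; apply/matrixP => s t; rewrite !mxE (inj_eq h_inj).
Qed.

Lemma coker_has_subgroup_Zk_pow_of_split (C : 'M[int]_l) (k : int) r
    (F : 'M[int]_(r, l)) (P : 'M[int]_(l, r)) :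
  (forall x : 'rV_l, x *m C = 0 -> x = 0) -> F *m C = k *: F -> F *m P = 1%:M ->
  coker_has_subgroup_Zk_pow C k r.
Proof.
move=> injC FC FP; exists (fun i => row i F); split=> [i | a [x xC] i].
  by exists (row i F); rewrite -row_mul FC linearZ.
pose u := \row_i a i.
have {}xC : x *m C = u *m F.
  by rewrite xC mulmx_sum_row; apply: eq_bigr => j _; rewrite mxE.
have kxE : k *: x = u *m F.
  apply/eqP; rewrite -subr_eq0; apply/eqP/injC.
  by rewrite mulmxBl -scalemxAl xC -mulmxA FC -scalemxAr subrr.
have /rowP/(_ i) := congr1 (mulmx^~ P) kxE.
rewrite -mulmxA FP mulmx1 -scalemxAl !mxE => <-.
by rewrite dvdz_mulr.
Qed.

Lemma coker_has_subgroup_Zk_pow_of_eigenspace (C : 'M[int]_l) (k : int) r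
    (E : 'M[R]_(r, l)) :
  row_free (map_mx (intr : int -> R) C) -> row_free E ->
  E *m map_mx intr C = k%:~R *: E ->
  coker_has_subgroup_Zk_pow C k r.
Proof.
move=> freeC freeE EC; have [|F [P FCk FP]] := @int_kernel_split r (C - k%:M) E freeE.
  by rewrite map_mxB map_scalar_mx mulmxBr EC mul_mx_scalar subrr.
apply: (coker_has_subgroup_Zk_pow_of_split _ _ FP).
  by move=> x; apply: intr_row_free_inj freeC.
by apply/eqP; rewrite -subr_eq0 -mul_mx_scalar -mulmxBr FCk.
Qed.

End IntegerCokernel.

Section IrreducibleCharacters.
Variables (gT : finGroupType) (G : {group gT}).

Lemma cfun_eq0_supp1 (psi : 'CF(G)) :
  (forall g, g \in G -> g != 1%g -> psi g = 0) -> '[psi, 1] = 0 -> psi = 0.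
Proof.
move=> psi_supp; rewrite cfdotE (bigD1 1%g) //= big1 ?addr0 => [|g /andP[gG g1]].
  rewrite cfun1E group1 conjC1 mulr1 => /eqP; rewrite mulf_eq0 invr_eq0 pnatr_eq0.
  rewrite eqn0Ngt cardG_gt0 /= => /eqP psi1; apply/cfunP => g; rewrite cfunE.
  have [gG|/cfun0 //] := boolP (g \in G).
  by have [->|] := eqVneq g 1%g; last exact: psi_supp.
by rewrite psi_supp ?mul0r.
Qed.

Lemma cfdot_sum_lift_irr (y : 'rV[algC]_(pred_Nirr G)) i :
  '[\sum_j y 0 j *: 'chi[G]_(lift 0 j), 'chi_i] = oapp (y 0) 0 (unlift 0 i).
Proof.
rewrite cfdot_suml; case: unliftP => [j ->|->] /=.
  rewrite (bigD1 j) //= big1 ?addr0 => [|k kj]; first by rewrite cfdotZl cfdot_irr eqxx mulr1.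
  by rewrite cfdotZl cfdot_irr (inj_eq lift_inj) (negbTE kj) mulr0.
by rewrite big1 // => j _; rewrite cfdotZl cfdot_irr eq_sym (negbTE (neq_lift _ _)) mulr0.
Qed.

Definition irr_diff_row (g c : gT) : 'rV[algC]_(pred_Nirr G) :=
  \row_j ('chi[G]_(lift 0 j) g - 'chi_(lift 0 j) c).

Lemma row_free_irr_diff r (gs : 'I_r -> gT) c :
    c \in G -> (forall s, gs s \in G) -> (forall s t, gs s \in (gs t ^: G)%g -> s = t) ->
    (forall t, c \notin (gs t ^: G)%g) ->
  row_free (\matrix_s irr_diff_row (gs s) c).
Proof.
move=> cG gsG gs_inj c_notin; apply/inj_row_free => v v0; apply/rowP => t; rewrite mxE.
have v_irr i : \sum_s v 0 s * ('chi[G]_i (gs s) - 'chi_i c) = 0.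
  case: (unliftP 0 i) => [j ->|->]; last first.
    by rewrite big1 // => s _; rewrite irr0 !cfun1E gsG cG subrr mulr0.
  move/rowP/(_ j): v0; rewrite !mxE => v0j; rewrite -[RHS]v0j.
  by apply: eq_bigr => s _; rewrite !mxE.
have : \sum_i (\sum_s v 0 s * ('chi[G]_i (gs s) - 'chi_i c)) * ('chi_i (gs t))^* = 0.
  by rewrite big1 // => i _; rewrite v_irr mul0r.
under eq_bigr do rewrite mulr_suml.
rewrite exchange_big /=.
under eq_bigr do (under eq_bigr do rewrite -mulrA mulrBl; rewrite -mulr_sumr sumrB).
under eq_bigr do rewrite !second_orthogonality_relation //.
rewrite (bigD1 t) //= big1 ?addr0 => [|s st]; rewrite (negbTE (c_notin t)) mulr0n subr0.
  rewrite class_refl mulr1n => /eqP; rewrite mulf_eq0 pnatr_eq0 eqn0Ngt cardG_gt0 orbF.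
  by move/eqP.
have /negbTE -> : gs s \notin (gs t ^: G)%g by apply: contra st => /gs_inj ->.
by rewrite mulr0n mulr0.
Qed.

Lemma class_reps (A : {set {set gT}}) c :
    c \in G -> A \subset classes G -> (c ^: G)%g \in A ->
  exists gs : 'I_#|A|.-1 -> gT,
    [/\ forall s, gs s \in G, forall s, (gs s ^: G)%g \in A,
         forall s, repr (gs s ^: G)%g = gs s,
         forall s t, gs s \in (gs t ^: G)%g -> s = t
       & forall t, c \notin (gs t ^: G)%g].
Proof.
move=> cG sAcl cA; rewrite (cardsD1 (c ^: G)%g) cA /=.
pose X (t : 'I_#|A :\ (c ^: G)%g|) := enum_val t.
have XA t : X t \in A :\ (c ^: G)%g by apply: enum_valP.
have X_class t : X t \in classes G by apply: (subsetP sAcl); case/setD1P: (XA t).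
exists (fun t => repr (X t)).
have defX t : X t = (repr (X t) ^: G)%g by have /repr_classesP[] := X_class t.
split=> [t | t | t | s t | t].
- by have /repr_classesP[] := X_class t.
- by rewrite -defX; case/setD1P: (XA t).
- by rewrite -defX.
- by move/class_eqP; rewrite -!defX => /enum_val_inj.
apply/negP => /class_eqP; rewrite -defX => cX.
by case/setD1P: (XA t); rewrite -cX eqxx.
Qed.

End IrreducibleCharacters.

Section McKayCartan.
Variables (gT : finGroupType) (G : {group gT}) (n : nat).
Variable rG : mx_representation algC G n.
Local Notation chi := (cfRepr rG).

Lemma mckay_coefE i j : (mckay_coef rG i j)%:~R = '[chi * 'chi_i, 'chi_j].
Proof.
rewrite /mckay_coef floorK //; apply: intr_nat.
by apply: Cnat_cfdot_char; rewrite ?irr_char // rpredM ?cfRepr_char ?irr_char.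
Qed.

Lemma ext_mckay_cartan_irr i :
  (n%:R - chi) * 'chi_i = \sum_j (ext_mckay_cartan rG i j)%:~R *: 'chi_j.
Proof.
under eq_bigr => j _ do rewrite mxE rmorphB /= mckay_coefE rmorphMn /= scalerBl.
rewrite sumrB -cfun_sum_cfdot mulrBl mulr_natl; congr (_ - _).
rewrite (bigD1 i) //= big1 ?addr0 => [|j ji]; first by rewrite eqxx mulr1n scaler_nat.
by rewrite eq_sym (negbTE ji) mulr0n scale0r.
Qed.

Lemma deg_sub_cfReprE g : g \in G -> (n%:R - chi) g = n%:R - chi g.
Proof. by move=> gG; rewrite cfunE [X in _ + X]cfunE muln_cfunE cfun1E gG. Qed.

Lemma faithful_cfRepr_eq_deg g :
  mx_faithful rG -> g \in G -> chi g = n%:R -> g = 1%g.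
Proof.
move=> faithful gG chi_g; have : g \in rker rG.
  by apply/rkerP; split=> //; apply: max_cfRepr_mx1; rewrite // cfRepr1.
by move/(subsetP faithful); rewrite inE => /eqP.
Qed.

Lemma mckay_cartan_ker_cfun (y : 'rV[algC]_(pred_Nirr G)) :
    y *m map_mx intr (mckay_cartan rG) = 0 ->
  (n%:R - chi) * (\sum_j y 0 j *: 'chi_(lift 0 j)) = 0.
Proof.
move=> yC0; set t := \sum_j y 0 j * (ext_mckay_cartan rG (lift 0 j) 0)%:~R.
have def_t : (n%:R - chi) * (\sum_j y 0 j *: 'chi_(lift 0 j)) = t *: 'chi_0.
  rewrite mulr_sumr; under eq_bigr do rewrite -scalerAr ext_mckay_cartan_irr scaler_sumr.
  rewrite exchange_big big_ord_recl /= [X in _ + X]big1 ?addr0 => [|k _].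
    by rewrite /t scaler_suml; apply: eq_bigr => j _; rewrite scalerA.
  under eq_bigr do rewrite scalerA.
  rewrite -scaler_suml; move/rowP/(_ k): yC0; rewrite !mxE => yCk.
  rewrite (_ : \sum_i _ = 0) ?scale0r // -[RHS]yCk.
  by apply: eq_bigr => i _; rewrite !mxE.
rewrite def_t; suff -> : t = 0 by rewrite scale0r.
(* at 1 the factor n - chi vanishes *)
move/cfunP/(_ 1%g): def_t; rewrite cfunE deg_sub_cfReprE // cfRepr1 subrr mul0r.
by rewrite cfunE irr0 cfun1E group1 mulr1.
Qed.

Lemma mckay_cartan_row_free :
  mx_faithful rG -> row_free (map_mx (intr : int -> algC) (mckay_cartan rG)).
Proof.
move=> faithful; apply/inj_row_free => y yC0.
set psi := \sum_j y 0 j *: 'chi_(lift 0 j).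
have psi0 : psi = 0.
  apply: cfun_eq0_supp1 => [g gG g1|]; last by rewrite -irr0 cfdot_sum_lift_irr unlift_none.
  have /cfunP/(_ g) := mckay_cartan_ker_cfun yC0.
  rewrite -/psi [(_ * psi) g]cfunE [(0 : 'CF(G)) g]cfunE deg_sub_cfReprE //.
  move/eqP; rewrite mulf_eq0 subr_eq0 => /orP[/eqP chi_g|/eqP //].
  by case/eqP: g1; apply: faithful_cfRepr_eq_deg.
apply/rowP => j; rewrite mxE -[y 0 j]/(oapp (y 0) 0 (Some j)) -(liftK 0 j).
by rewrite -cfdot_sum_lift_irr -/psi psi0 cfdot0l.
Qed.

Section RealCharacter.
Hypothesis real_char : forall g, chi g \is Num.real.

Lemma ext_mckay_cartan_sym i j : ext_mckay_cartan rG i j = ext_mckay_cartan rG j i.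
Proof.
rewrite !mxE eq_sym; congr (_ - _); apply: (@intr_inj algC); rewrite !mckay_coefE.
have nat_ji : '[chi * 'chi_j, 'chi_i] \is a Num.nat.
  by apply: Cnat_cfdot_char; rewrite ?irr_char // rpredM ?cfRepr_char ?irr_char.
rewrite -(conj_natr nat_ji) -cfdotC !cfdotE; congr (_ * _); apply: eq_bigr => x _.
by rewrite ![(chi * _) x]cfunE rmorphM /= (CrealP (real_char x)) mulrA (mulrC (chi x)).
Qed.

Lemma sum_irr_ext_mckay_cartan g j : g \in G ->
  \sum_i 'chi_i g * (ext_mckay_cartan rG i j)%:~R = (n%:R - chi g) * 'chi_j g.
Proof.
move=> gG; have /cfunP/(_ g) := ext_mckay_cartan_irr j.
rewrite cfunE deg_sub_cfReprE // sum_cfunE => ->.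
by apply: eq_bigr => i _; rewrite cfunE mulrC ext_mckay_cartan_sym.
Qed.

Lemma irr_diff_row_eigen g c : g \in G -> c \in G -> chi g = chi c ->
  irr_diff_row G g c *m map_mx intr (mckay_cartan rG) = (n%:R - chi c) *: irr_diff_row G g c.
Proof.
move=> gG cG chi_gc; apply/rowP => j; rewrite !mxE.
have : \sum_i ('chi_i g - 'chi_i c) * (ext_mckay_cartan rG i (lift 0 j))%:~R
    = (n%:R - chi c) * ('chi_(lift 0 j) g - 'chi_(lift 0 j) c).
  under eq_bigr do rewrite mulrBl.
  by rewrite sumrB !sum_irr_ext_mckay_cartan // chi_gc mulrBr.
rewrite big_ord_recl /= irr0 !cfun1E gG cG subrr mul0r add0r => <-.
by apply: eq_bigr => i _; rewrite !mxE.
Qed.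

End RealCharacter.

End McKayCartan.

Unset Implicit Arguments.
Set Strict Implicit.

Theorem theorem1 (gT : finGroupType) (G : {group gT}) (n : nat)
    (rG : mx_representation algC G n)
    (faithful : mx_faithful rG)
    (real_char : forall g, cfRepr rG g \is Num.real)
    (c : gT) (cG : c \in G) (z : int) (chi_c_int : cfRepr rG c = z%:~R) :
  let m := #|[set xG in classes G | cfRepr rG (repr xG) == cfRepr rG c]| in
  coker_has_subgroup_Zk_pow (mckay_cartan rG) (n%:Z - z) m.-1.
Proof.
move=> m; rewrite /m; set A := [set xG in classes G | _].
have cA : (c ^: G)%g \in A.
  by rewrite inE mem_classes //=; have [y yG ->] := repr_class G c; rewrite cfunJ.
have sAcl : A \subset classes G by apply/subsetP => X; rewrite inE => /andP[].
have [gs [gsG gsA gsK gs_inj c_notin]] := class_reps cG sAcl cA.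
have chi_gs s : cfRepr rG (gs s) = cfRepr rG c.
  by move: (gsA s); rewrite inE gsK => /andP[_ /eqP].
apply: (coker_has_subgroup_Zk_pow_of_eigenspace (E := \matrix_s irr_diff_row G (gs s) c)).
- exact: mckay_cartan_row_free.
- exact: row_free_irr_diff.
apply/row_matrixP => s; rewrite row_mul linearZ /= !rowK irr_diff_row_eigen //.
by rewrite rmorphB /= chi_c_int.
Qed.
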